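(* Let $P\in\Delta_{\mathcal{T},\mathcal{X},\mathcal{Y}}$ and suppose $|\mathcal{T}|<\min\{|\mathcal{X}|,|\mathcal{Y}|\}$. If there exists a maximizer of $H_Q(T\mid X,Y)$ over $Q\in\Delta_P$ with full support $\mathcal{T}\times\mathcal{X}\times\mathcal{Y}$, then the maximizer is not unique.
   Context: $T,X,Y$ are random variables with finite state spaces $\mathcal{T},\mathcal{X},\mathcal{Y}$; $\Delta_{\mathcal{T},\mathcal{X},\mathcal{Y}}$ is the set of all joint distributions on $\mathcal{T}\times\mathcal{X}\times\mathcal{Y}$. For $P\in\Delta_{\mathcal{T},\mathcal{X},\mathcal{Y}}$, $\Delta_P=\{Q\in\Delta_{\mathcal{T},\mathcal{X},\mathcal{Y}}: Q(X=x,T=t)=P(X=x,T=t),\ Q(Y=y,T=t)=P(Y=y,T=t)\ \forall x,y,t\}$. $H_Q(T\mid X,Y)$ is the conditional entropy under $Q$. *)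

From HB Require Import structures.
From mathcomp Require Import all_boot.
From Stdlib Require Import Reals.
Set Implicit Arguments. Unset Strict Implicit. Unset Printing Implicit Defensive.

Section Defs.
Variables (T X Y : finType).

Definition jdist := T -> X -> Y -> R.

Definition rsum (I : finType) (F : I -> R) : R := \big[Rplus/R0]_(i : I) F i.

Definition is_dist (Q : jdist) : Prop :=
  (forall t x y, (0 <= Q t x y)%R) /\
  rsum (fun t => rsum (fun x => rsum (fun y => Q t x y))) = 1%R.

Definition margTX (Q : jdist) (t : T) (x : X) : R := rsum (fun y => Q t x y).
Definition margTY (Q : jdist) (t : T) (y : Y) : R := rsum (fun x => Q t x y).
Definition margXY (Q : jdist) (x : X) (y : Y) : R := rsum (fun t => Q t x y).

Definition DeltaP (P Q : jdist) : Prop :=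
  is_dist Q /\
  (forall t x, margTX Q t x = margTX P t x) /\
  (forall t y, margTY Q t y = margTY P t y).

Definition condEntTXY (Q : jdist) : R :=
  (- rsum (fun t => rsum (fun x => rsum (fun y =>
       if Req_EM_T (Q t x y) 0 then 0%R
       else (Q t x y * ln (Q t x y / margXY Q x y))%R))))%R.

Definition is_maximizer (P Q : jdist) : Prop :=
  DeltaP P Q /\ forall Q', DeltaP P Q' -> (condEntTXY Q' <= condEntTXY Q)%R.

Definition full_support (Q : jdist) : Prop := forall t x y, (0 < Q t x y)%R.

End Defs.

From mathcomp Require Import all_boot.
From Stdlib Require Import Reals.
From mathcomp Require Import all_algebra Rstruct.
From Coquelicot Require Import Coquelicot.
From Stdlib Require Import Lra FunctionalExtensionality.
Set Implicit Arguments. Unset Strict Implicit. Unset Printing Implicit Defensive.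

(* At a full-support maximizer Q the conditional entropy is stationary along
   every direction D preserving the (T,X) and (T,Y) marginals, which reads
   sum D(t,x,y) ln Q(t|x,y) = 0.  Rectangle directions (+1,-1,-1,+1 on
   {x1,x2} x {y1,y2} at a fixed t) then force Q(t|x,y) = a(t,x) b(t,y).  As
   |T| < |X| and |T| < |Y|, there are nonzero u, v with
   sum_x u(x) a(t,x) = 0 = sum_y v(y) b(t,y) for all t, and the direction
   D = u(x) a(t,x) v(y) b(t,y) preserves both marginals while being
   proportional to Q on every fibre {(t,x,y) : t in T}.  Moving along D leaves
   Q(t|x,y) unchanged, so by stationarity the entropy stays maximal, and small
   steps stay inside Delta_P. *)

Section NonzeroKernelVector.
Local Open Scope ring_scope.
Variables (F : fieldType) (I J : finType).

Lemma exists_nonzero_kernel_vector (A : J -> I -> F) : (#|J| < #|I|)%nat ->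
  exists u : I -> F, (exists i, u i != 0) /\ forall j, \sum_i u i * A j i = 0.
Proof.
move=> ltJI.
pose M : 'M[F]_(#|I|, #|J|) := \matrix_(i, j) A (enum_val j) (enum_val i).
have : (0 < \rank (kermx M))%nat.
  by rewrite mxrank_ker subn_gt0 (leq_ltn_trans (rank_leq_col M)).
rewrite lt0n mxrank_eq0 => nzK.
have [[k c] /= Kkc] : exists ki, kermx M ki.1 ki.2 != 0.
  apply/existsP; apply: contraNT nzK; rewrite negb_exists => /forallP K0.
  by apply/eqP/matrixP => k i; move/negPn/eqP: (K0 (k, i)) => ->; rewrite mxE.
have wM : row k (kermx M) *m M = 0 by apply/eqP; rewrite -sub_kermx row_sub.
exists (fun i => row k (kermx M) 0 (enum_rank i)); split.
  by exists (enum_val c); rewrite enum_valK mxE.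
move=> j; have /matrixP/(_ 0 (enum_rank j)) := wM; rewrite !mxE => wMj.
rewrite -[in RHS]wMj [RHS](reindex enum_rank) /=; last first.
  by exists enum_val => x _; rewrite ?enum_valK ?enum_rankK.
by apply: eq_bigr => i _; rewrite !mxE !enum_rankK.
Qed.
End NonzeroKernelVector.

Local Open Scope R_scope.

Section RealSums.
Variable I : finType.
Implicit Types F G : I -> R.

Lemma rsum_eq F G : (forall i, F i = G i) -> rsum F = rsum G.
Proof. by move=> FG; apply: eq_bigr => i _. Qed.

Lemma rsumD F G : rsum (fun i => F i + G i) = rsum F + rsum G.
Proof. exact: big_split. Qed.

Lemma rsumMl c F : rsum (fun i => c * F i) = c * rsum F.
Proof. by rewrite /rsum big_distrr. Qed.

Lemma rsumB F G : rsum (fun i => F i - G i) = rsum F - rsum G.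
Proof.
rewrite -[rsum G]Rmult_1_l /Rminus Ropp_mult_distr_l -rsumMl -rsumD.
by apply: rsum_eq => i; ring.
Qed.

Lemma rsum0 : rsum (fun _ : I => 0) = 0.
Proof. by rewrite /rsum big1. Qed.

Lemma rsum_ge0 F : (forall i, 0 <= F i) -> 0 <= rsum F.
Proof. by move=> F0; apply: big_ind => // [|x y]; [exact: Rle_refl | lra]. Qed.

Lemma rsum_ge_term F i : (forall i, 0 <= F i) -> F i <= rsum F.
Proof.
move=> F0; rewrite /rsum (bigD1 i) //=.
have : 0 <= \big[Rplus/R0]_(j | j != i) F j.
  by apply: big_ind => // [|x y]; [exact: Rle_refl | lra].
lra.
Qed.

Lemma finite_upper_bound F : exists K, 0 < K /\ forall i, F i <= K.
Proof.
exists (1 + rsum (fun i => Rabs (F i))); split=> [|i].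
  by have := rsum_ge0 (fun i => Rabs_pos (F i)); lra.
have := Rle_abs (F i); have := rsum_ge_term i (fun i => Rabs_pos (F i)); lra.
Qed.

Definition indic (a i : I) : R := if i == a then 1 else 0.

Lemma rsum_indicM a F : rsum (fun i => indic a i * F i) = F a.
Proof.
rewrite /rsum (bigD1 a) //= /indic eqxx big1 => [|i /negbTE ->]; ring.
Qed.

Lemma rsum_indic_diffM a b F :
  rsum (fun i => (indic a i - indic b i) * F i) = F a - F b.
Proof.
rewrite -(rsum_indicM a) -(rsum_indicM b) -rsumB.
by apply: rsum_eq => i; ring.
Qed.

Lemma rsum_indic_diff a b : rsum (fun i => indic a i - indic b i) = 0.
Proof.
rewrite -[RHS](Rminus_diag_eq 1 1) // -(rsum_indic_diffM a b (fun _ => 1)).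
by apply: rsum_eq => i; ring.
Qed.

Lemma derivable_pt_lim_rsum (f : I -> R -> R) (f' : I -> R) :
  (forall i, derivable_pt_lim (f i) 0 (f' i)) ->
  derivable_pt_lim (fun s => rsum (fun i => f i s)) 0 (rsum f').
Proof.
move=> df; rewrite /rsum; elim: (index_enum I) => [|i l IH].
  rewrite big_nil; apply: derivable_pt_lim_ext (derivable_pt_lim_const 0 0) => s.
  by rewrite big_nil.
rewrite big_cons.
apply: derivable_pt_lim_ext (derivable_pt_lim_plus _ _ _ _ _ (df i) IH) => s.
by rewrite big_cons.
Qed.

End RealSums.

Lemma derivable_pt_lim_mul_ln_ratio (q m d e : R) : 0 < q -> 0 < m ->
  derivable_pt_lim (fun s => (q + s * d) * ln ((q + s * d) / (m + s * e))) 0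
    (d * ln (q / m) + d - q * e / m).
Proof.
move=> q0 m0; apply is_derive_Reals; auto_derive.
  rewrite !Rmult_0_l !Rplus_0_r.
  by split; [lra | split; [exact: Rdiv_lt_0_compat | done]].
rewrite !Rmult_0_l !Rplus_0_r /Rdiv; field; lra.
Qed.

Section JointDistributions.
Variables T X Y : finType.
Notation jd := (jdist T X Y).
Implicit Types (P Q D : jd) (F G : T -> X -> Y -> R).

Definition rsum3 F := rsum (fun t => rsum (fun x => rsum (fun y => F t x y))).

Definition shift Q D (s : R) : jd := fun t x y => Q t x y + s * D t x y.

Definition zero_marginals D :=
  (forall t x, margTX D t x = 0) /\ (forall t y, margTY D t y = 0).

Definition logcond Q t x y := ln (Q t x y / margXY Q x y).

Lemma rsum3_eq F G : (forall t x y, F t x y = G t x y) -> rsum3 F = rsum3 G.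
Proof. by move=> FG; do 3! apply: rsum_eq => ?. Qed.

Lemma rsum3D F G : rsum3 (fun t x y => F t x y + G t x y) = rsum3 F + rsum3 G.
Proof.
rewrite /rsum3 -rsumD; apply: rsum_eq => t; rewrite -rsumD.
by apply: rsum_eq => x; rewrite rsumD.
Qed.

Lemma rsum3Ml c F : rsum3 (fun t x y => c * F t x y) = c * rsum3 F.
Proof.
rewrite /rsum3 -rsumMl; apply: rsum_eq => t; rewrite -rsumMl.
by apply: rsum_eq => x; rewrite rsumMl.
Qed.

Lemma rsum3_exchange F :
  rsum3 F = rsum (fun x => rsum (fun y => rsum (fun t => F t x y))).
Proof.
by rewrite /rsum3 /rsum exchange_big; apply: eq_bigr => x _; rewrite exchange_big.
Qed.

Lemma margTX_shift Q D s t x :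
  margTX (shift Q D s) t x = margTX Q t x + s * margTX D t x.
Proof. by rewrite /margTX /shift rsumD rsumMl. Qed.

Lemma margTY_shift Q D s t y :
  margTY (shift Q D s) t y = margTY Q t y + s * margTY D t y.
Proof. by rewrite /margTY /shift rsumD rsumMl. Qed.

Lemma margXY_shift Q D s x y :
  margXY (shift Q D s) x y = margXY Q x y + s * margXY D x y.
Proof. by rewrite /margXY /shift rsumD rsumMl. Qed.

Lemma is_dist_card_gt0 Q : is_dist Q -> (0 < #|T|)%nat.
Proof.
case=> _; rewrite lt0n; apply: contra_eqN => /eqP/card0_eq T0.
by rewrite /rsum big_pred0 //; apply/eqP; lra.
Qed.

Lemma margXY_gt0 Q x y : is_dist Q -> full_support Q -> 0 < margXY Q x y.
Proof.
move=> /is_dist_card_gt0/card_gt0P[t _] Q0.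
by apply: Rlt_le_trans (Q0 t x y) (rsum_ge_term t (fun t => Rlt_le _ _ (Q0 t x y))).
Qed.

Lemma condEnt_full_support Q : full_support Q ->
  condEntTXY Q = - rsum3 (fun t x y => Q t x y * logcond Q t x y).
Proof.
move=> Q0; rewrite /condEntTXY; f_equal; apply: rsum3_eq => t x y.
by case: (Req_dec_T (Q t x y) 0) => // Q0'; have := Q0 t x y; lra.
Qed.

Lemma shift_full_support_near0 Q D : full_support Q ->
  exists2 d, 0 < d & forall s, Rabs s < d -> full_support (shift Q D s).
Proof.
move=> Q0.
have [K [K0 DK]] := finite_upper_bound (fun p : T * X * Y => Rabs (D p.1.1 p.1.2 p.2)).
have [L [L0 QL]] := finite_upper_bound (fun p : T * X * Y => / Q p.1.1 p.1.2 p.2).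
exists (/ (K * L)) => [|s sd t x y]; first by apply/Rinv_0_lt_compat/Rmult_lt_0_compat.
have invL_Q : / L <= Q t x y.
  rewrite -[Q t x y]Rinv_inv; apply: Rinv_le_contravar; last exact: (QL (t, x, y)).
  exact/Rinv_0_lt_compat/Q0.
have sD : Rabs (s * D t x y) < / L.
  rewrite Rabs_mult; apply: (Rle_lt_trans _ (Rabs s * K)).
    exact/Rmult_le_compat_l/(DK (t, x, y))/Rabs_pos.
  apply: (Rlt_le_trans _ (/ (K * L) * K)); first exact: Rmult_lt_compat_r.
  by rewrite Rinv_mult Rmult_comm -Rmult_assoc Rinv_r; lra.
by rewrite /shift; have := Rle_abs (- (s * D t x y)); rewrite Rabs_Ropp; lra.
Qed.

Lemma shift_DeltaP P Q D s : DeltaP P Q -> zero_marginals D ->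
  (forall t x y, 0 <= shift Q D s t x y) -> DeltaP P (shift Q D s).
Proof.
move=> [[_ Q1] [QTX QTY]] [DTX DTY] S0.
have STX t x : margTX (shift Q D s) t x = margTX P t x.
  by rewrite margTX_shift DTX QTX; ring.
split; [split=> // | split=> // t y]; last by rewrite margTY_shift DTY QTY; ring.
rewrite -Q1; do 2! apply: rsum_eq => ?.
by rewrite -/(margTX _ _ _) STX -QTX.
Qed.

End JointDistributions.

Section Maximizers.
Variables T X Y : finType.
Notation jd := (jdist T X Y).
Implicit Types (P Q D : jd).

Lemma zero_marginals_product (f : T -> X -> R) (g : T -> Y -> R) :
  (forall t, rsum (f t) = 0) -> (forall t, rsum (g t) = 0) ->
  zero_marginals (fun t x y => f t x * g t y).
Proof.
move=> f0 g0; split=> [t x | t y]; first by rewrite /margTX rsumMl g0 Rmult_0_r.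
rewrite /margTY (rsum_eq (G := fun x => g t y * f t x)) => [|x]; last by ring.
by rewrite rsumMl f0 Rmult_0_r.
Qed.

Lemma derivable_pt_lim_shift_negentropy Q D : is_dist Q -> full_support Q ->
  derivable_pt_lim
    (fun s => rsum3 (fun t x y => shift Q D s t x y * logcond (shift Q D s) t x y)) 0
    (rsum3 (fun t x y => D t x y * logcond Q t x y)).
Proof.
move=> distQ suppQ; have m0 x y := margXY_gt0 x y distQ suppQ.
have cancel : rsum3 (fun t x y => D t x y - Q t x y * margXY D x y / margXY Q x y) = 0.
  rewrite rsum3_exchange -(rsum0 X); apply: rsum_eq => x; rewrite -(rsum0 Y).
  apply: rsum_eq => y; rewrite rsumB -/(margXY D x y).
  rewrite (rsum_eq (G := fun t => margXY D x y / margXY Q x y * Q t x y)) => [|t].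
    by rewrite rsumMl -/(margXY Q x y); field; have := m0 x y; lra.
  by rewrite /Rdiv; ring.
have -> : rsum3 (fun t x y => D t x y * logcond Q t x y) =
    rsum3 (fun t x y => D t x y * logcond Q t x y) +
    rsum3 (fun t x y => D t x y - Q t x y * margXY D x y / margXY Q x y).
  by rewrite cancel Rplus_0_r.
rewrite -rsum3D.
apply: (derivable_pt_lim_ext (fun s => rsum3 (fun t x y =>
    (Q t x y + s * D t x y) *
    ln ((Q t x y + s * D t x y) / (margXY Q x y + s * margXY D x y))))) => [s|].
  by apply: rsum3_eq => t x y; rewrite /logcond margXY_shift.
do 3 apply: derivable_pt_lim_rsum => ?.
by rewrite /Rminus -Rplus_assoc; apply: derivable_pt_lim_mul_ln_ratio.
Qed.

Lemma maximizer_stationary P Q D : is_maximizer P Q -> full_support Q ->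
  zero_marginals D -> rsum3 (fun t x y => D t x y * logcond Q t x y) = 0.
Proof.
move=> [DQ maxQ] suppQ D0.
have [d d0 suppS] := shift_full_support_near0 D suppQ.
pose G s := - rsum3 (fun t x y => shift Q D s t x y * logcond (shift Q D s) t x y).
have GS s : Rabs s < d -> G s = condEntTXY (shift Q D s).
  by move=> sd; rewrite condEnt_full_support //; exact: suppS.
have shift0 : shift Q D 0 = Q.
  by do 3 apply: functional_extensionality => ?; rewrite /shift Rmult_0_l Rplus_0_r.
have dG := derivable_pt_lim_opp _ _ _
  (derivable_pt_lim_shift_negentropy D DQ.1 suppQ).
have G_le_G0 s : - d < s -> s < d -> G s <= G 0.
  move=> ds sd; rewrite !GS ?shift0 ?Rabs_R0 //; last by apply: Rabs_def1.
  by apply/maxQ/shift_DeltaP => // t x y; apply/Rlt_le/suppS/Rabs_def1.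
have := deriv_maximum G (- d) d 0 (exist _ _ dG) ltac:(lra) d0 G_le_G0.
rewrite /derive_pt /=; lra.
Qed.

Lemma maximizer_logcond_rectangle P Q t x1 x2 y1 y2 :
  is_maximizer P Q -> full_support Q ->
  logcond Q t x1 y1 + logcond Q t x2 y2 = logcond Q t x1 y2 + logcond Q t x2 y1.
Proof.
move=> maxQ suppQ.
pose f t' x := indic t t' * (indic x1 x - indic x2 x).
pose g (t' : T) y := indic y1 y - indic y2 y.
have D0 : zero_marginals (fun t' x y => f t' x * g t' y).
  apply: zero_marginals_product => t'; last exact: rsum_indic_diff.
  by rewrite rsumMl rsum_indic_diff Rmult_0_r.
have := maximizer_stationary maxQ suppQ D0.
rewrite /rsum3 (rsum_eq (G := fun t' => indic t t' *
  rsum (fun x => (indic x1 x - indic x2 x) *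
    rsum (fun y => (indic y1 y - indic y2 y) * logcond Q t' x y)))) => [|t'].
  by rewrite rsum_indicM rsum_indic_diffM !rsum_indic_diffM; lra.
rewrite -rsumMl; apply: rsum_eq => x; rewrite -!rsumMl; apply: rsum_eq => y.
by rewrite /f /g; ring.
Qed.

Lemma maximizer_cond_factorization P Q (x0 : X) (y0 : Y) :
  is_maximizer P Q -> full_support Q ->
  exists (a : T -> X -> R) (b : T -> Y -> R),
    forall t x y, Q t x y = margXY Q x y * (a t x * b t y).
Proof.
move=> maxQ suppQ.
exists (fun t x => exp (logcond Q t x y0)).
exists (fun t y => exp (logcond Q t x0 y - logcond Q t x0 y0)) => t x y.
have m0 := margXY_gt0 x y maxQ.1.1 suppQ.
have rect := maximizer_logcond_rectangle t x x0 y y0 maxQ suppQ.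
rewrite -exp_plus (_ : _ + _ = logcond Q t x y); last by lra.
rewrite exp_ln; last exact: Rdiv_lt_0_compat.
by field; lra.
Qed.

Lemma logcond_shift_proportional Q D (w : X -> Y -> R) s t x y :
  (forall t x y, D t x y = w x y * Q t x y) -> full_support (shift Q D s) ->
  logcond (shift Q D s) t x y = logcond Q t x y.
Proof.
move=> Dw suppS.
have S t' : shift Q D s t' x y = (1 + s * w x y) * Q t' x y.
  by rewrite /shift Dw; ring.
have M : margXY (shift Q D s) x y = (1 + s * w x y) * margXY Q x y.
  by rewrite /margXY -rsumMl; apply: rsum_eq.
have c0 : 1 + s * w x y <> 0.
  by move=> c0; have := suppS t x y; rewrite S c0 Rmult_0_l; lra.
rewrite /logcond S M /Rdiv Rinv_mult; set im := / margXY Q x y.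
by congr ln; field.
Qed.

Lemma condEnt_shift_proportional P Q D (w : X -> Y -> R) s :
  is_maximizer P Q -> full_support Q -> zero_marginals D ->
  (forall t x y, D t x y = w x y * Q t x y) -> full_support (shift Q D s) ->
  condEntTXY (shift Q D s) = condEntTXY Q.
Proof.
move=> maxQ suppQ D0 Dw suppS; rewrite !condEnt_full_support //.
rewrite (rsum3_eq (G := fun t x y =>
  Q t x y * logcond Q t x y + s * (D t x y * logcond Q t x y))) => [|t x y].
  by rewrite rsum3D rsum3Ml (maximizer_stationary maxQ suppQ D0); ring.
by rewrite (logcond_shift_proportional t x y Dw suppS) /shift; ring.
Qed.

Lemma exists_other_maximizer P Q D (w : X -> Y -> R) t x y :
  is_maximizer P Q -> full_support Q -> zero_marginals D ->
  (forall t x y, D t x y = w x y * Q t x y) -> D t x y <> 0 ->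
  exists Q', is_maximizer P Q' /\ Q' <> Q.
Proof.
move=> maxQ suppQ D0 Dw Dtxy.
have [d d0 suppS] := shift_full_support_near0 D suppQ.
have sd : Rabs (d / 2) < d by rewrite Rabs_pos_eq; lra.
exists (shift Q D (d / 2)); split.
  split; first by apply: shift_DeltaP maxQ.1 D0 _ => t' x' y'; apply/Rlt_le/suppS.
  move=> Q' DQ'; rewrite (condEnt_shift_proportional maxQ suppQ D0 Dw (suppS _ sd)).
  exact: maxQ.2.
move=> /(congr1 (fun Q' => Q' t x y)); rewrite /shift => E.
have : d / 2 * D t x y = 0 by lra.
by case/Rmult_integral; lra.
Qed.

Lemma exists_other_maximizer_of_factorization P Q
    (a : T -> X -> R) (b : T -> Y -> R) (u : X -> R) (v : Y -> R) xu yv :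
  is_maximizer P Q -> full_support Q ->
  (forall t x y, Q t x y = margXY Q x y * (a t x * b t y)) ->
  (forall t, rsum (fun x => u x * a t x) = 0) ->
  (forall t, rsum (fun y => v y * b t y) = 0) ->
  u xu <> 0 -> v yv <> 0 ->
  exists Q', is_maximizer P Q' /\ Q' <> Q.
Proof.
move=> maxQ suppQ Qab ua0 vb0 uxu vyv.
have /card_gt0P[t0 _] := is_dist_card_gt0 maxQ.1.1.
have m0 x y := margXY_gt0 x y maxQ.1.1 suppQ.
have ab0 t x y : a t x * b t y <> 0.
  by move=> ab0; have := suppQ t x y; rewrite Qab ab0 Rmult_0_r; lra.
apply: (@exists_other_maximizer P Q (fun t x y => u x * a t x * (v y * b t y))
  (fun x y => u x * v y / margXY Q x y) t0 xu yv maxQ suppQ).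
- exact: zero_marginals_product ua0 vb0.
- by move=> t x y; rewrite Qab; field; have := m0 x y; lra.
- have -> : u xu * a t0 xu * (v yv * b t0 yv) = u xu * v yv * (a t0 xu * b t0 yv).
    by ring.
  by apply: Rmult_integral_contrapositive_currified;
    [exact: Rmult_integral_contrapositive_currified | exact: ab0].
Qed.

End Maximizers.

(* Under R_scope, [(_ < _)%N] would not denote ssrnat's comparison. *)
Local Close Scope R_scope.
Theorem mainTheorem8 (T X Y : finType) (P : jdist T X Y) :
  is_dist P ->
  (#|T| < minn #|X| #|Y|)%N ->
  (exists Q, is_maximizer P Q /\ full_support Q) ->
  exists Q1 Q2, is_maximizer P Q1 /\ is_maximizer P Q2 /\ Q1 <> Q2.
Proof.
move=> _; rewrite leq_min => /andP[ltTX ltTY] [Q [maxQ suppQ]].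
have T0 := is_dist_card_gt0 maxQ.1.1.
have /card_gt0P[x0 _] := ltn_trans T0 ltTX.
have /card_gt0P[y0 _] := ltn_trans T0 ltTY.
have [a [b Qab]] := maximizer_cond_factorization x0 y0 maxQ suppQ.
have [u [[xu /eqP uxu] ua0]] := exists_nonzero_kernel_vector a ltTX.
have [v [[yv /eqP vyv] vb0]] := exists_nonzero_kernel_vector b ltTY.
have [Q' [maxQ' Q'Q]] :=
  exists_other_maximizer_of_factorization maxQ suppQ Qab ua0 vb0 uxu vyv.
by exists Q', Q.
Qed.
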